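(* Let $0<\rho\le 1/2$, $0<s\le1$, and let $A=2/(\rho s)$. For every twist system with parameter $\rho$ on $n\ge2$ points, its $s$-energy satisfies $$\mathcal{E}(s)\le \sum_{1\le i<j\le n}A^{\,j-i}.$$ In particular $\mathcal{E}(s)\le 2/(\rho s)$ if $n=2$, and $\mathcal{E}(s)< 2\,(2/(\rho s))^{n-1}$ if $n>2$.
   Context: A twist system with parameter $\rho\in(0,1/2]$ on $n$ points is a sequence of configurations $x^{(t)}=(x_1\le x_2\le\dots\le x_n)\in[0,1]^n$, $t\ge1$, such that each transition from $x=x^{(t)}$ to $y=x^{(t+1)}$ is as follows: some integers $1\le u<v\le n$ are chosen (depending on $t$), and for $u\le i\le v$ the twist of $x_i$ is the interval $$\tau_i=\bigl[x_u+\rho(x_{\min\{i+1,v\}}-x_u),\; x_v-\rho(x_v-x_{\max\{i-1,u\}})\bigr];$$ the new configuration must satisfy (i) $y_1\le\dots\le y_n$, and (ii) $y_i\in\tau_i$ for $u\le i\le v$ and $y_i=x_i$ otherwise. The choices of $u,v$ and of the $y_i$ are otherwise arbitrary. The $s$-energy of the twist system is $\mathcal{E}(s)=\sum_{t\ge1}(x_v-x_u)^s$, where $u,v$ are those chosen at step $t$ and $x=x^{(t)}$. *)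

From Stdlib Require Import Reals Lra Lia Arith.
Open Scope R_scope.

(* Real power d^s for d >= 0, s > 0, with the convention 0^s = 0
   (Stdlib's Rpower 0 s would be 1). *)
Definition rpow (d s : R) : R := if Rle_dec d 0 then 0 else Rpower d s.

Fixpoint rsum (f : nat -> R) (m : nat) : R :=
  match m with
  | O => 0
  | S k => rsum f k + f k
  end.

(* Points are indexed 1..n; a configuration is a function nat -> R,
   only its values at 1..n matter. *)
Definition config (n : nat) (x : nat -> R) : Prop :=
  (forall i, (1 <= i <= n)%nat -> 0 <= x i <= 1) /\
  (forall i, (1 <= i < n)%nat -> x i <= x (S i)).

Definition tau_lo (rho : R) (x : nat -> R) (u v i : nat) : R :=
  x u + rho * (x (Nat.min (S i) v) - x u).
Definition tau_hi (rho : R) (x : nat -> R) (u v i : nat) : R :=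
  x v - rho * (x v - x (Nat.max (i - 1) u)).

Definition twist_step (rho : R) (n : nat) (x y : nat -> R) (u v : nat) : Prop :=
  (1 <= u /\ u < v /\ v <= n)%nat /\
  (forall i, (1 <= i < n)%nat -> y i <= y (S i)) /\
  (forall i, (u <= i <= v)%nat -> tau_lo rho x u v i <= y i <= tau_hi rho x u v i) /\
  (forall i, (1 <= i <= n)%nat -> ~ (u <= i <= v)%nat -> y i = x i).

Definition twist_system (rho : R) (n : nat) (X : nat -> nat -> R) (U V : nat -> nat) : Prop :=
  forall t, (1 <= t)%nat ->
    config n (X t) /\ twist_step rho n (X t) (X (S t)) (U t) (V t).

Definition energy_partial (s : R) (X : nat -> nat -> R) (U V : nat -> nat) (T : nat) : R :=
  rsum (fun k => rpow (X (S k) (V (S k)) - X (S k) (U (S k))) s) T.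

(* sum_{1 <= i < j <= n} A^(j-i)  (indices shifted to 0..n-1) *)
Definition pair_sum (A : R) (n : nat) : R :=
  rsum (fun a => rsum (fun b => if Nat.ltb a b then A ^ (b - a) else 0) n) n.

From Stdlib Require Import Reals Lra Lia Psatz.
Open Scope R_scope.

(* The potential [sum_(i<j) A^(j-i) (x_j - x_i)^s], with [A = 2/(rho s)], is at most
   [pair_sum A n] on [[0,1]^n] and drops by at least [(x_v - x_u)^s] at every step, so the
   energy telescopes against it.  By concavity of [d |-> d^s], on each pair meeting the
   block [[u, v]] a twist gains [rho] times the first-order credits of the inward pulls,
   minus the excess of the power of the hull over the power of the pair.  That excess is at
   most [1/s] times the credits of the pairs one index wider, which the weights discount by
   [1/A]: half of the credits survive, and the credit of the pair [(u, u+1)] alone is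
   [A s (x_v - x_u)^s]. *)

Lemma rpow_ge0 d s : 0 <= rpow d s.
Proof. unfold rpow; destruct (Rle_dec d 0); [lra | left; apply exp_pos]. Qed.

Lemma rpow0 s : rpow 0 s = 0.
Proof. unfold rpow; destruct (Rle_dec 0 0); lra. Qed.

Lemma rpow_Rpower d s : 0 < d -> rpow d s = Rpower d s.
Proof. intros Hd; unfold rpow; destruct (Rle_dec d 0); [lra | reflexivity]. Qed.

Lemma rpow_le d1 d2 s : 0 <= s -> d1 <= d2 -> rpow d1 s <= rpow d2 s.
Proof.
  intros Hs Hd; unfold rpow.
  destruct (Rle_dec d1 0), (Rle_dec d2 0); try lra.
  - left; apply exp_pos.
  - apply Rle_Rpower_l; lra.
Qed.

Lemma Rpower1l s : Rpower 1 s = 1.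
Proof. unfold Rpower; rewrite ln_1, Rmult_0_r; apply exp_0. Qed.

Lemma rpow_le1 d s : 0 <= s -> d <= 1 -> rpow d s <= 1.
Proof. intros Hs Hd; rewrite <- (Rpower1l s), <- (rpow_Rpower 1) by lra; now apply rpow_le. Qed.

Lemma rpow_mult d q s : 0 < d -> 0 <= q -> rpow (d * q) s = rpow d s * rpow q s.
Proof.
  intros Hd Hq; destruct (Req_dec q 0) as [->|Hq0].
  - now rewrite Rmult_0_r, !rpow0, Rmult_0_r.
  - rewrite !rpow_Rpower by nra; symmetry; apply Rpower_mult_distr; lra.
Qed.

(* Weighted AM-GM [z^s 1^(1-s) <= s z + (1 - s)], from [1 + w <= exp w] at the two
   points [w = (1 - s) ln z] and [w = - s ln z]. *)
Lemma Rpower_bernoulli z s : 0 < z -> 0 <= s <= 1 -> Rpower z s <= 1 + s * (z - 1).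
Proof.
  intros Hz Hs; unfold Rpower; set (L := ln z); set (g := exp (s * L)).
  set (e1 := exp ((1 - s) * L)); set (e2 := exp (- s * L)).
  assert (Ez : z = e1 * g).
  { unfold e1, g, L; rewrite <- exp_plus, <- (exp_ln z) at 1 by lra; f_equal; ring. }
  assert (E1 : 1 = e2 * g).
  { unfold e2, g; rewrite <- exp_plus, <- exp_0; f_equal; ring. }
  assert (E : 1 + s * (z - 1) = g * (s * e1 + (1 - s) * e2)).
  { rewrite Ez; replace (g * (s * e1 + (1 - s) * e2)) with (s * (e1 * g) + (1 - s) * (e2 * g)) by ring.
    rewrite <- E1; ring. }
  assert (I1 := exp_ineq1_le ((1 - s) * L)); assert (I2 := exp_ineq1_le (- s * L)).
  fold e1 e2 in I1, I2.
  assert (Hg : 0 < g) by apply exp_pos.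
  assert (1 <= s * e1 + (1 - s) * e2) by nra.
  rewrite E; nra.
Qed.

Lemma rpow_bernoulli q s : 0 <= q -> 0 <= s <= 1 -> rpow q s <= 1 + s * (q - 1).
Proof.
  intros Hq Hs; destruct (Req_dec q 0) as [->|Hq0].
  - rewrite rpow0; lra.
  - rewrite rpow_Rpower by lra; apply Rpower_bernoulli; lra.
Qed.

Lemma rpow_ge_base q s : 0 <= q <= 1 -> 0 <= s <= 1 -> q <= rpow q s.
Proof.
  intros Hq Hs; destruct (Req_dec q 0) as [->|Hq0]; [rewrite rpow0; lra|].
  rewrite rpow_Rpower by lra.
  assert (Hc : Rpower q (1 - s) <= Rpower 1 (1 - s)) by (apply Rle_Rpower_l; lra).
  rewrite Rpower1l in Hc.
  assert (Hp : 0 < Rpower q s) by apply exp_pos.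
  rewrite <- (Rpower_1 q) at 1 by lra.
  replace 1 with (s + (1 - s)) at 1 by ring; rewrite Rpower_plus; nra.
Qed.

(* The first-order decrease of [d^s] when [d] decreases by [t]; junk [0] at [d = 0]. *)
Definition tangent_drop (s d t : R) : R := s * rpow d s * t / d.

Lemma tangent_drop_ge0 s d t : 0 <= s -> 0 <= t -> 0 <= tangent_drop s d t.
Proof.
  intros Hs Ht; unfold tangent_drop, Rdiv.
  destruct (Rle_dec d 0).
  - unfold rpow; destruct (Rle_dec d 0); [|lra]; rewrite Rmult_0_r, !Rmult_0_l; lra.
  - assert (0 <= s * rpow d s) by (apply Rmult_le_pos; [lra | apply rpow_ge0]).
    apply Rmult_le_pos; [nra | left; apply Rinv_0_lt_compat; lra].
Qed.

Lemma tangent_drop0 s d : tangent_drop s d 0 = 0.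
Proof. unfold tangent_drop, Rdiv; ring. Qed.

Lemma tangent_dropD s d t1 t2 :
  tangent_drop s d (t1 + t2) = tangent_drop s d t1 + tangent_drop s d t2.
Proof. unfold tangent_drop, Rdiv; ring. Qed.

Lemma tangent_dropZ s d c t : tangent_drop s d (c * t) = c * tangent_drop s d t.
Proof. unfold tangent_drop, Rdiv; ring. Qed.

Lemma tangent_drop_diag s d : tangent_drop s d d = s * rpow d s.
Proof.
  unfold tangent_drop; destruct (Req_dec d 0) as [->|Hd].
  - rewrite rpow0; unfold Rdiv; ring.
  - field; exact Hd.
Qed.

(* Concavity of [d |-> d^s]: its graph lies below the tangent at [d] ... *)
Lemma rpow_le_tangent s d t e : 0 < s <= 1 -> 0 <= t -> 0 <= e <= d - t ->
  rpow e s <= rpow d s - tangent_drop s d t.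
Proof.
  intros Hs Ht He; apply Rle_trans with (rpow (d - t) s); [apply rpow_le; lra|].
  destruct (Req_dec d 0) as [Hd0|Hd0].
  - replace t with 0 by lra; rewrite tangent_drop0, Hd0, Rminus_0_r; lra.
  - set (q := (d - t) / d).
    assert (Hq : 0 <= q) by (apply Rmult_le_pos; [lra | left; apply Rinv_0_lt_compat; lra]).
    replace (d - t) with (d * q) by (unfold q; field; lra).
    rewrite rpow_mult by lra.
    assert (B := rpow_bernoulli q s Hq ltac:(lra)).
    assert (Hr := rpow_ge0 d s).
    replace (rpow d s - tangent_drop s d t) with (rpow d s * (1 + s * (q - 1)))
      by (unfold tangent_drop, q; field; lra).
    now apply Rmult_le_compat_l.
Qed.

(* ... and above the chord from [0] to [d]. *)
Lemma rpow_sub_le_chord s d t : 0 < s <= 1 -> 0 <= t <= d ->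
  rpow d s - rpow (d - t) s <= tangent_drop s d t / s.
Proof.
  intros Hs Ht; destruct (Req_dec d 0) as [Hd0|Hd0].
  - replace t with 0 by lra; rewrite tangent_drop0, Hd0, Rminus_0_r; unfold Rdiv; lra.
  - set (q := (d - t) / d).
    assert (Hq : 0 <= q <= 1).
    { unfold q; split; [apply Rmult_le_pos; [lra | left; apply Rinv_0_lt_compat; lra]|].
      apply Rmult_le_reg_r with d; [lra|]; field_simplify; lra. }
    replace (d - t) with (d * q) by (unfold q; field; lra).
    rewrite rpow_mult by lra.
    assert (B := rpow_ge_base q s Hq ltac:(lra)).
    assert (Hr := rpow_ge0 d s).
    replace (tangent_drop s d t / s) with (rpow d s * (1 - q)) by (unfold tangent_drop, q; field; lra).
    nra.
Qed.

Lemma rsum_ext f g m : (forall k, (k < m)%nat -> f k = g k) -> rsum f m = rsum g m.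
Proof.
  induction m as [|m IH]; intros H; simpl; [reflexivity|].
  rewrite IH, H; [reflexivity | lia | intros; apply H; lia].
Qed.

Lemma rsum_le f g m : (forall k, (k < m)%nat -> f k <= g k) -> rsum f m <= rsum g m.
Proof.
  induction m as [|m IH]; intros H; simpl; [lra|].
  assert (rsum f m <= rsum g m) by (apply IH; intros; apply H; lia).
  assert (f m <= g m) by (apply H; lia); lra.
Qed.

Lemma rsum0 m : rsum (fun _ => 0) m = 0.
Proof. induction m as [|m IH]; simpl; [|rewrite IH]; ring. Qed.

Lemma rsum_ge0 f m : (forall k, (k < m)%nat -> 0 <= f k) -> 0 <= rsum f m.
Proof. intros H; rewrite <- (rsum0 m); now apply rsum_le. Qed.

Lemma rsum_lincomb c1 c2 f g m :
  rsum (fun k => c1 * f k + c2 * g k) m = c1 * rsum f m + c2 * rsum g m.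
Proof. induction m as [|m IH]; simpl; [|rewrite IH]; ring. Qed.

Lemma rsum_scal c f m : rsum (fun k => c * f k) m = c * rsum f m.
Proof. induction m as [|m IH]; simpl; [|rewrite IH]; ring. Qed.

Lemma rsum_ge_term f m k : (forall k, (k < m)%nat -> 0 <= f k) -> (k < m)%nat -> f k <= rsum f m.
Proof.
  induction m as [|m IH]; intros H Hk; [lia|]; simpl.
  assert (0 <= f m) by (apply H; lia).
  destruct (Nat.eq_dec k m) as [->|Hkm].
  - assert (0 <= rsum f m) by (apply rsum_ge0; intros; apply H; lia); lra.
  - assert (f k <= rsum f m) by (apply IH; [intros; apply H | ]; lia); lra.
Qed.

Lemma rsumSl f m : rsum f (S m) = f O + rsum (fun k => f (S k)) m.
Proof.
  induction m as [|m IH]; [simpl; ring|].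
  change (rsum f (S (S m))) with (rsum f (S m) + f (S m)); rewrite IH; simpl; ring.
Qed.

Definition pair_wsum (A : R) (n : nat) (F : nat -> nat -> R) : R :=
  rsum (fun a => rsum (fun b => if Nat.ltb a b then A ^ (b - a) * F (S a) (S b) else 0) n) n.

Section PairWsum.

Variables (A : R) (n : nat).
Hypothesis HA : 0 < A.

Lemma pair_wsum_le F G :
  (forall i j, (1 <= i)%nat -> (i < j)%nat -> (j <= n)%nat -> F i j <= G i j) ->
  pair_wsum A n F <= pair_wsum A n G.
Proof.
  intros H; apply rsum_le; intros a Ha; apply rsum_le; intros b Hb.
  destruct (Nat.ltb_spec a b); [|lra].
  apply Rmult_le_compat_l; [apply pow_le; lra | apply H; lia].
Qed.

Lemma pair_wsum_lincomb c1 c2 F G :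
  pair_wsum A n (fun i j => c1 * F i j + c2 * G i j) = c1 * pair_wsum A n F + c2 * pair_wsum A n G.
Proof.
  unfold pair_wsum; rewrite <- rsum_lincomb; apply rsum_ext; intros a _.
  rewrite <- rsum_lincomb; apply rsum_ext; intros b _; destruct (Nat.ltb a b); ring.
Qed.

Variable F : nat -> nat -> R.
Hypothesis HF : forall i j, 0 <= F i j.

Let summand_ge0 a b : 0 <= (if Nat.ltb a b then A ^ (b - a) * F (S a) (S b) else 0).
Proof. destruct (Nat.ltb a b); [apply Rmult_le_pos; [apply pow_le; lra | apply HF] | lra]. Qed.

Lemma pair_wsum_ge0 : 0 <= pair_wsum A n F.
Proof. apply rsum_ge0; intros a _; apply rsum_ge0; intros b _; apply summand_ge0. Qed.

Lemma pair_wsum_ge_term i j : (1 <= i)%nat -> (i < j)%nat -> (j <= n)%nat ->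
  A ^ (j - i) * F i j <= pair_wsum A n F.
Proof.
  intros Hi Hij Hj.
  set (row := fun a => rsum (fun b => if Nat.ltb a b then A ^ (b - a) * F (S a) (S b) else 0) n).
  apply Rle_trans with (row (i - 1)%nat).
  - eapply Rle_trans; [|apply (rsum_ge_term _ n (j - 1)); [intros; apply summand_ge0 | lia]].
    cbv beta; destruct (Nat.ltb_spec (i - 1) (j - 1)); [|lia].
    replace (j - 1 - (i - 1))%nat with (j - i)%nat by lia.
    replace (S (i - 1)) with i by lia; replace (S (j - 1)) with j by lia; lra.
  - apply (rsum_ge_term row); [|lia].
    intros a _; apply rsum_ge0; intros b _; apply summand_ge0.
Qed.

Lemma pair_wsum_shiftr : (forall i, F i (S n) = 0) ->
  pair_wsum A n (fun i j => F i (S j)) <= / A * pair_wsum A n F.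
Proof.
  intros Hn; unfold pair_wsum; rewrite <- rsum_scal; apply rsum_le; intros a _.
  set (phi := fun b => if Nat.ltb a b then A ^ (b - a) * F (S a) (S b) else 0).
  assert (HiA : 0 < / A) by (apply Rinv_0_lt_compat; lra).
  apply Rle_trans with (/ A * rsum (fun b => phi (S b)) n).
  - rewrite <- rsum_scal; apply rsum_le; intros b _; unfold phi.
    destruct (Nat.ltb_spec a b), (Nat.ltb_spec a (S b)); try lia.
    + replace (S b - a)%nat with (S (b - a)) by lia; simpl; right; field; lra.
    + assert (0 <= A ^ (S b - a) * F (S a) (S (S b))) by (apply Rmult_le_pos; [apply pow_le; lra | apply HF]).
      nra.
    + lra.
  - assert (E : rsum (fun b => phi (S b)) n = rsum phi n + phi n - phi O)
      by (change (rsum phi n + phi n) with (rsum phi (S n)); rewrite rsumSl; ring).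
    assert (Z : phi n = 0) by (unfold phi; rewrite Hn; destruct (Nat.ltb a n); ring).
    assert (0 <= phi O) by apply summand_ge0.
    rewrite E, Z; apply Rmult_le_compat_l; lra.
Qed.

Lemma pair_wsum_shiftl : (1 <= n)%nat -> (forall j, F O j = 0) ->
  pair_wsum A n (fun i j => F (Nat.pred i) j) <= / A * pair_wsum A n F.
Proof.
  intros Hn1 H0; unfold pair_wsum; simpl Nat.pred.
  destruct n as [|m]; [lia|].
  set (psi := fun a => rsum (fun b => if Nat.ltb a b then A ^ (b - a) * F (S a) (S b) else 0) (S m)).
  assert (HiA : 0 < / A) by (apply Rinv_0_lt_compat; lra).
  rewrite rsumSl; fold psi.
  rewrite (rsum_ext _ (fun _ => 0)), rsum0, Rplus_0_l
    by (intros b _; rewrite H0; destruct (Nat.ltb 0 b); ring).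
  apply Rle_trans with (/ A * rsum psi m).
  - rewrite <- rsum_scal; apply rsum_le; intros a _; unfold psi.
    rewrite <- rsum_scal; apply rsum_le; intros b _.
    destruct (Nat.ltb_spec (S a) b), (Nat.ltb_spec a b); try lia.
    + replace (b - a)%nat with (S (b - S a)) by lia; simpl; right; field; lra.
    + assert (0 <= A ^ (b - a) * F (S a) (S b)) by (apply Rmult_le_pos; [apply pow_le; lra | apply HF]).
      nra.
    + lra.
  - assert (0 <= psi m) by (apply rsum_ge0; intros; apply summand_ge0).
    change (rsum psi (S m)) with (rsum psi m + psi m); nra.
Qed.

End PairWsum.

Lemma sorted_le n (x : nat -> R) : (forall i, (1 <= i < n)%nat -> x i <= x (S i)) ->
  forall p q, (1 <= p)%nat -> (p <= q)%nat -> (q <= n)%nat -> x p <= x q.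
Proof.
  intros Hx p q Hp Hpq Hq; induction Hpq as [|q Hpq IH]; [lra|].
  apply Rle_trans with (x q); [apply IH; lia | apply Hx; lia].
Qed.

Definition in_block (u v k : nat) : bool := Nat.leb u k && Nat.leb k v.

Lemma in_blockP u v k : reflect (u <= k <= v)%nat (in_block u v k).
Proof.
  unfold in_block; destruct (Nat.leb_spec0 u k), (Nat.leb_spec0 k v); constructor; lia.
Qed.

Definition potential (s A : R) (n : nat) (x : nat -> R) : R :=
  pair_wsum A n (fun i j => rpow (x j - x i) s).

Section TwistStep.

Variables (rho s : R) (n u v : nat) (x y : nat -> R).
Hypotheses (Hrho : 0 < rho) (Hs : 0 < s <= 1).
Hypothesis Hx : forall i, (1 <= i < n)%nat -> x i <= x (S i).
Hypothesis Hstep : twist_step rho n x y u v.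

Let Hu : (1 <= u)%nat := proj1 (proj1 Hstep).
Let Huv : (u < v)%nat := proj1 (proj2 (proj1 Hstep)).
Let Hvn : (v <= n)%nat := proj2 (proj2 (proj1 Hstep)).
Let Hy := proj1 (proj2 Hstep).
Let Htau := proj1 (proj2 (proj2 Hstep)).
Let Hout := proj2 (proj2 (proj2 Hstep)).

Let x_le p q : (1 <= p)%nat -> (p <= q)%nat -> (q <= n)%nat -> x p <= x q.
Proof. now apply sorted_le. Qed.

(* A moved point [j] of the block ends at least [rho * pull_hi j] below [x v] and at
   least [rho * pull_lo j] above [x u]: the twist interval of [j]. *)
Definition pull_hi (j : nat) : R := if in_block u v j then x v - x (Nat.max (j - 1) u) else 0.
Definition pull_lo (i : nat) : R := if in_block u v i then x (Nat.min (S i) v) - x u else 0.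

Definition hull (i j : nat) : R := x (Nat.max j v) - x (Nat.min i u).

Definition credit_hi (i j : nat) : R := tangent_drop s (hull i j) (pull_hi j).
Definition credit_lo (i j : nat) : R := tangent_drop s (hull i j) (pull_lo i).

Definition excess (i j : nat) : R :=
  if (in_block u v i || in_block u v j)%bool then rpow (hull i j) s - rpow (x j - x i) s else 0.

Lemma pull_hi_ge0 j : 0 <= pull_hi j.
Proof.
  unfold pull_hi; destruct (in_blockP u v j); [|lra].
  assert (x (Nat.max (j - 1) u) <= x v) by (apply x_le; lia); lra.
Qed.

Lemma pull_lo_ge0 i : 0 <= pull_lo i.
Proof.
  unfold pull_lo; destruct (in_blockP u v i); [|lra].
  assert (x u <= x (Nat.min (S i) v)) by (apply x_le; lia); lra.
Qed.

Lemma credit_hi_ge0 i j : 0 <= credit_hi i j.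
Proof. apply tangent_drop_ge0; [lra | apply pull_hi_ge0]. Qed.

Lemma credit_lo_ge0 i j : 0 <= credit_lo i j.
Proof. apply tangent_drop_ge0; [lra | apply pull_lo_ge0]. Qed.

Lemma y_le_upper j : (1 <= j <= n)%nat -> y j <= x (Nat.max j v) - rho * pull_hi j.
Proof.
  intros Hj; unfold pull_hi; destruct (in_blockP u v j) as [Hb|Hb].
  - replace (Nat.max j v) with v by lia; apply (Htau j Hb).
  - rewrite (Hout j Hj Hb); assert (x j <= x (Nat.max j v)) by (apply x_le; lia); lra.
Qed.

Lemma y_ge_lower i : (1 <= i <= n)%nat -> x (Nat.min i u) + rho * pull_lo i <= y i.
Proof.
  intros Hi; unfold pull_lo; destruct (in_blockP u v i) as [Hb|Hb].
  - replace (Nat.min i u) with u by lia; apply (Htau i Hb).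
  - rewrite (Hout i Hi Hb); assert (x (Nat.min i u) <= x i) by (apply x_le; lia); lra.
Qed.

Lemma pair_drop_ge i j : (1 <= i)%nat -> (i < j)%nat -> (j <= n)%nat ->
  rho * (credit_hi i j + credit_lo i j) - excess i j <= rpow (x j - x i) s - rpow (y j - y i) s.
Proof.
  intros Hi Hij Hj; unfold excess.
  destruct (in_block u v i || in_block u v j)%bool eqn:Hmeet.
  - assert (Hyij : y i <= y j) by (apply (sorted_le n); auto; lia).
    assert (Up := y_le_upper j ltac:(lia)); assert (Lo := y_ge_lower i ltac:(lia)).
    assert (0 <= pull_hi j) by apply pull_hi_ge0; assert (0 <= pull_lo i) by apply pull_lo_ge0.
    assert (T := rpow_le_tangent s (hull i j) (rho * (pull_hi j + pull_lo i)) (y j - y i) Hs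
      ltac:(nra) ltac:(unfold hull; lra)).
    rewrite tangent_dropZ, tangent_dropD in T; fold (credit_hi i j) (credit_lo i j) in T; lra.
  - apply Bool.orb_false_iff in Hmeet as [Hbi Hbj].
    unfold credit_hi, credit_lo, pull_hi, pull_lo.
    destruct (in_blockP u v i) as [|Hi']; [discriminate|].
    destruct (in_blockP u v j) as [|Hj']; [discriminate|].
    rewrite (Hout i), (Hout j), !tangent_drop0 by (assumption || lia); lra.
Qed.

Lemma credit_hi_succ i j : (u <= j)%nat ->
  credit_hi i (S j) = tangent_drop s (hull i j) (x (Nat.max j v) - x j).
Proof.
  intros Hj; unfold credit_hi, pull_hi, hull.
  destruct (in_blockP u v (S j)) as [Hb|Hb].
  - replace (Nat.max (S j) v) with v by lia; replace (Nat.max j v) with v by lia.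
    now replace (Nat.max (S j - 1) u) with j by lia.
  - replace (Nat.max j v) with j by lia; rewrite Rminus_diag; now rewrite !tangent_drop0.
Qed.

Lemma credit_lo_pred i j : (i <= v)%nat ->
  credit_lo (Nat.pred i) j = tangent_drop s (hull i j) (x i - x (Nat.min i u)).
Proof.
  intros Hi; unfold credit_lo, pull_lo, hull.
  destruct (in_blockP u v (Nat.pred i)) as [Hb|Hb].
  - replace (Nat.min (Nat.pred i) u) with u by lia; replace (Nat.min i u) with u by lia.
    now replace (Nat.min (S (Nat.pred i)) v) with i by lia.
  - replace (Nat.min i u) with i by lia; rewrite Rminus_diag; now rewrite !tangent_drop0.
Qed.

Lemma excess_le i j : (1 <= i)%nat -> (i < j)%nat -> (j <= n)%nat ->
  excess i j <= / s * credit_hi i (S j) + / s * credit_lo (Nat.pred i) j.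
Proof.
  intros Hi Hij Hj; unfold excess.
  destruct (in_block u v i || in_block u v j)%bool eqn:Hmeet.
  - assert (Hmeet' : (u <= i <= v \/ u <= j <= v)%nat).
    { destruct (in_blockP u v i), (in_blockP u v j); auto; discriminate. }
    rewrite credit_hi_succ, credit_lo_pred, <- Rmult_plus_distr_l, <- tangent_dropD by lia.
    assert (x (Nat.min i u) <= x i) by (apply x_le; lia).
    assert (x i <= x j) by (apply x_le; lia).
    assert (x j <= x (Nat.max j v)) by (apply x_le; lia).
    assert (C := rpow_sub_le_chord s (hull i j) (x (Nat.max j v) - x j + (x i - x (Nat.min i u))) Hs
      ltac:(unfold hull; lra)).
    replace (hull i j - _) with (x j - x i) in C by (unfold hull; ring).
    unfold Rdiv in C; lra.
  - assert (0 < / s) by (apply Rinv_0_lt_compat; lra).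
    assert (0 <= credit_hi i (S j)) by apply credit_hi_ge0.
    assert (0 <= credit_lo (Nat.pred i) j) by apply credit_lo_ge0; nra.
Qed.

Lemma potential_drop :
  potential s (2 / (rho * s)) n y <= potential s (2 / (rho * s)) n x - rpow (x v - x u) s.
Proof.
  set (A := 2 / (rho * s)); unfold potential.
  assert (HA : 0 < A) by (unfold A; apply Rdiv_lt_0_compat; nra).
  set (W := pair_wsum A n).
  assert (Drop : W (fun i j => 1 * (rho * credit_hi i j + rho * credit_lo i j) + (-1) * excess i j)
              <= W (fun i j => 1 * rpow (x j - x i) s + (-1) * rpow (y j - y i) s)).
  { apply pair_wsum_le; [exact HA|]; intros i j Hi Hij Hj.
    assert (P := pair_drop_ge i j Hi Hij Hj); lra. }
  unfold W in Drop; rewrite !pair_wsum_lincomb in Drop; fold W in Drop.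
  assert (Cross : W excess <= / s * (/ A * W credit_hi + / A * W credit_lo)).
  { apply Rle_trans with (W (fun i j => / s * credit_hi i (S j) + / s * credit_lo (Nat.pred i) j)).
    - apply pair_wsum_le; [exact HA|]; intros i j Hi Hij Hj; now apply excess_le.
    - unfold W; rewrite pair_wsum_lincomb, <- Rmult_plus_distr_l.
      apply Rmult_le_compat_l; [left; apply Rinv_0_lt_compat; lra|].
      assert (R := pair_wsum_shiftr A n HA credit_hi credit_hi_ge0
        ltac:(intros i; unfold credit_hi, pull_hi; destruct (in_blockP u v (S n)); [lia|];
              apply tangent_drop0)).
      assert (L := pair_wsum_shiftl A n HA credit_lo credit_lo_ge0 ltac:(lia)
        ltac:(intros j; unfold credit_lo, pull_lo; destruct (in_blockP u v 0); [lia|];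
              apply tangent_drop0)).
      lra. }
  assert (Gain : A * (s * rpow (x v - x u) s) <= W credit_hi).
  { assert (T := pair_wsum_ge_term A n HA credit_hi credit_hi_ge0 u (S u) Hu ltac:(lia) ltac:(lia)).
    replace (S u - u)%nat with 1%nat in T by lia.
    unfold credit_hi, pull_hi, hull in T; destruct (in_blockP u v (S u)); [|lia].
    replace (Nat.max (S u) v) with v in T by lia; replace (Nat.max (S u - 1) u) with u in T by lia.
    rewrite Nat.min_id, tangent_drop_diag, pow_1 in T; exact T. }
  assert (Hlo : 0 <= W credit_lo) by (apply pair_wsum_ge0; [lra | apply credit_lo_ge0]).
  assert (Ehalf : / s * / A = rho / 2) by (unfold A; field; lra).
  assert (Eunit : rho / 2 * (A * (s * rpow (x v - x u) s)) = rpow (x v - x u) s) by (unfold A; field; lra).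
  nra.
Qed.

End TwistStep.

Lemma potential_ge0 s A n x : 0 < A -> 0 <= potential s A n x.
Proof. intros HA; apply pair_wsum_ge0; [exact HA | intros; apply rpow_ge0]. Qed.

Lemma potential_le_pair_sum s A n x : 0 < A -> 0 <= s -> config n x -> potential s A n x <= pair_sum A n.
Proof.
  intros HA Hs [Hx _]; unfold potential, pair_wsum, pair_sum.
  apply rsum_le; intros a Ha; apply rsum_le; intros b Hb.
  destruct (Nat.ltb a b); [|lra].
  assert (rpow (x (S b) - x (S a)) s <= 1).
  { apply rpow_le1; [exact Hs|]; assert (H1 := Hx (S b) ltac:(lia)); assert (H2 := Hx (S a) ltac:(lia)); lra. }
  assert (0 <= A ^ (b - a)) by (apply pow_le; lra); nra.
Qed.

Lemma energy_partial_le_pair_sum rho s n X U V : 0 < rho -> 0 < s <= 1 ->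
  twist_system rho n X U V -> forall T, energy_partial s X U V T <= pair_sum (2 / (rho * s)) n.
Proof.
  intros Hrho Hs Hsys; set (A := 2 / (rho * s)).
  assert (HA : 0 < A) by (unfold A; apply Rdiv_lt_0_compat; nra).
  assert (Tele : forall T, energy_partial s X U V T + potential s A n (X (S T)) <= potential s A n (X 1%nat)).
  { induction T as [|T IH]; [unfold energy_partial; simpl; lra|].
    destruct (Hsys (S T) ltac:(lia)) as [[_ Hx] Hstep].
    assert (D := potential_drop rho s n (U (S T)) (V (S T)) (X (S T)) (X (S (S T))) Hrho Hs Hx Hstep).
    unfold energy_partial in *; simpl rsum; fold A in D; lra. }
  intros T; assert (Tl := Tele T); assert (P := potential_ge0 s A n (X (S T)) HA).
  destruct (Hsys 1%nat ltac:(lia)) as [Hc _].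
  assert (potential s A n (X 1%nat) <= pair_sum A n) by (apply potential_le_pair_sum; auto; lra).
  lra.
Qed.

Definition pow_sum (A : R) (n : nat) : R := rsum (fun a => A ^ (n - a)) n.

Lemma pair_sum_succ A n : pair_sum A (S n) = pair_sum A n + pow_sum A n.
Proof.
  unfold pair_sum, pow_sum.
  set (Q := fun a m => rsum (fun b => if Nat.ltb a b then A ^ (b - a) else 0) m).
  change (rsum (fun a => Q a (S n)) n + Q n (S n) = rsum (fun a => Q a n) n + rsum (fun a => A ^ (n - a)) n).
  assert (Z : Q n (S n) = 0).
  { unfold Q; rewrite (rsum_ext _ (fun _ => 0)), rsum0; [reflexivity|].
    intros b Hb; destruct (Nat.ltb_spec n b); [lia | reflexivity]. }
  rewrite Z, Rplus_0_r, (rsum_ext _ (fun a => 1 * Q a n + 1 * A ^ (n - a))), rsum_lincomb; [ring|].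
  intros a Ha; unfold Q; simpl rsum; destruct (Nat.ltb_spec a n); [ring | lia].
Qed.

Lemma pow_sum_mul A n : pow_sum A n * (A - 1) = A ^ S n - A.
Proof.
  induction n as [|n IH]; [unfold pow_sum; simpl; ring|].
  assert (E : pow_sum A (S n) = A * pow_sum A n + A).
  { unfold pow_sum; cbn [rsum]; rewrite <- rsum_scal.
    replace (S n - n)%nat with 1%nat by lia; rewrite pow_1; f_equal.
    apply rsum_ext; intros k Hk; replace (S n - k)%nat with (S (n - k)) by lia; reflexivity. }
  rewrite E; replace ((A * pow_sum A n + A) * (A - 1)) with (A * (pow_sum A n * (A - 1)) + A * (A - 1)) by ring.
  rewrite IH; simpl; ring.
Qed.

Lemma pow_sum_le A n : 4 <= A -> pow_sum A n <= 4 / 3 * A ^ n.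
Proof.
  intros HA; apply Rmult_le_reg_r with (A - 1); [lra|].
  rewrite pow_sum_mul; simpl.
  assert (0 <= A ^ n) by (apply pow_le; lra); nra.
Qed.

Lemma pair_sum_two A : pair_sum A 2 = A.
Proof. unfold pair_sum; simpl; ring. Qed.

Lemma pair_sum_le A n : 4 <= A -> (2 <= n)%nat -> pair_sum A n <= 16 / 9 * A ^ (n - 1).
Proof.
  intros HA Hn; induction Hn as [|n Hn IH]; [rewrite pair_sum_two; simpl; lra|].
  rewrite pair_sum_succ; assert (W := pow_sum_le A n HA).
  replace (S n - 1)%nat with (S (n - 1)) by lia; replace n with (S (n - 1)) in W at 2 by lia.
  simpl in *; assert (0 <= A ^ (n - 1)) by (apply pow_le; lra); nra.
Qed.

Theorem mainTheorem4 (rho s : R) (n : nat) (X : nat -> nat -> R) (U V : nat -> nat) :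
  0 < rho -> rho <= 1/2 -> 0 < s -> s <= 1 -> (2 <= n)%nat ->
  twist_system rho n X U V ->
  (forall T, energy_partial s X U V T <= pair_sum (2 / (rho * s)) n) /\
  (n = 2%nat -> forall T, energy_partial s X U V T <= 2 / (rho * s)) /\
  ((2 < n)%nat -> exists B, B < 2 * (2 / (rho * s)) ^ (n - 1) /\
      forall T, energy_partial s X U V T <= B).
Proof.
  intros Hrho Hrho2 Hs Hs1 Hn Hsys.
  assert (Energy := energy_partial_le_pair_sum rho s n X U V Hrho ltac:(lra) Hsys).
  set (A := 2 / (rho * s)) in *.
  assert (HA : 4 <= A).
  { unfold A; apply Rmult_le_reg_r with (rho * s); [nra|].
    unfold Rdiv; rewrite Rmult_assoc, Rinv_l by nra; nra. }
  split; [exact Energy | split].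
  - intros -> T; rewrite <- (pair_sum_two A); apply Energy.
  - intros Hn2; exists (pair_sum A n); split; [|exact Energy].
    assert (0 < A ^ (n - 1)) by (apply pow_lt; lra).
    assert (B := pair_sum_le A n HA Hn); lra.
Qed.
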